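(* The restrictions $\rho(x_1),\dots,\rho(x_N)$ are algebraically independent generators of the coordinate algebra $F[S]$ of the affine subspace $S=f+V\subseteq\mathfrak{g}_e^*$.
   Context: $F$ is an algebraically closed field of characteristic zero; $\lambda=(\lambda_1,\dots,\lambda_n)$ is a composition of $N$ with positive parts and $\lambda_1\le\cdots\le\lambda_n$; $s_{i,j}:=\lambda_j-\min(\lambda_i,\lambda_j)$. $e\in\mathfrak{gl}_N(F)$ is the nilpotent matrix with Jordan blocks $\lambda_1,\dots,\lambda_n$ down the diagonal and $\mathfrak{g}_e$ its centralizer. With the diagram whose row $i$ has $\lambda_i$ boxes, filled with $1,\dots,N$ along rows, and $\mathrm{row}(h),\mathrm{col}(h)$ the row/column of $h$, set $e_{i,j;r}:=\sum_{\mathrm{row}(h)=i,\mathrm{row}(k)=j,\mathrm{col}(k)-\mathrm{col}(h)=r}e_{h,k}$ for $s_{i,j}\le r<\lambda_j$; these form a basis of $\mathfrak{g}_e$. Let $\{f_{i,j;r}\}$ be the dual basis of $\mathfrak{g}_e^*$. Identify $S(\mathfrak{g}_e)$ with the coordinate algebra $F[\mathfrak{g}_e^*]$. Let $f:=f_{1,2;\lambda_2-1}+f_{2,3;\lambda_3-1}+\cdots+f_{n-1,n;\lambda_n-1}$, let $V$ be the span of $\{f_{n,i;r}:1\le i\le n,\ 0\le r<\lambda_i\}$, $S:=f+V$, and $\rho:F[\mathfrak{g}_e^*]\to F[S]$ restriction of functions. $(d_1,\dots,d_N)$ consists of $\lambda_n$ copies of $1$, then $\lambda_{n-1}$ copies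 of $2$, ..., then $\lambda_1$ copies of $n$. For $\mu\subseteq\lambda$ ($0\le\mu_i\le\lambda_i$), $|\mu|=\sum\mu_i$, $\ell(\mu)$ = number of nonzero parts. For $r=1,\dots,N$ with $d=d_r$, $x_r:=\sum_{\mu\subseteq\lambda,\ |\mu|=r,\ \ell(\mu)=d}\sum_{w\in S_d}\mathrm{sgn}(w)\,e_{i_{w1},i_1;\mu_{i_1}-1}\cdots e_{i_{wd},i_d;\mu_{i_d}-1}\in S(\mathfrak{g}_e)$, where $i_1<\cdots<i_d$ are the positions of the nonzero entries of $\mu$. *)

From HB Require Import structures.
From mathcomp Require Import all_boot all_order all_algebra all_fingroup.
From mathcomp Require Import mpoly.
Set Implicit Arguments. Unset Strict Implicit. Unset Printing Implicit Defensive.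
Import GRing.Theory.
Local Open Scope ring_scope.

(* Conventions: the composition lambda = (lambda_1,...,lambda_n) is the
   sequence [lam]; indices are 0-based, so paper index i corresponds to i-1. *)
Section Centralizer.
Variable (F : fieldType) (lam : seq nat).

Definition nparts : nat := size lam.
Definition lm (i : nat) : nat := nth 0%N lam i.
Definition Ntot : nat := sumn lam.
Definition sij (i j : nat) : nat := (lm j - minn (lm i) (lm j))%N.

(* index set of the basis e_{i,j;r} (s_{i,j} <= r < lambda_j) of g_e,
   equivalently of the dual basis f_{i,j;r} of g_e^* *)
Definition gvalid (t : 'I_nparts * 'I_nparts * 'I_Ntot) : bool :=
  (sij t.1.1 t.1.2 <= t.2)%N && (t.2 < lm t.1.2)%N.
Definition gidx := {t : 'I_nparts * 'I_nparts * 'I_Ntot | gvalid t}.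

(* S(g_e) = F[g_e^*] : polynomial ring in the basis e_{i,j;r} *)
Definition Sge := {mpoly F[#|{: gidx}|]}.

(* e_{i,j;r} in S(g_e) (nat indices, 0-based); it is interpreted as 0
   when (i,j,r) is not a basis index, i.e. r < s_{i,j} or r >= lambda_j. *)
Definition evar (i j r : nat) : Sge :=
  \sum_(t : gidx | [&& ((sval t).1.1 : nat) == i, ((sval t).1.2 : nat) == j
                     & ((sval t).2 : nat) == r]) 'X_(enum_rank t).

Definition dseq : seq nat :=
  flatten [seq nseq (lm (nparts - k.+1)) k.+1 | k <- iota 0 nparts].
Definition dd (r : nat) : nat := nth 0%N dseq r.-1.

Definition mu_ok (r d : nat) (mu : {ffun 'I_nparts -> 'I_Ntot.+1}) : bool :=
  [&& [forall i, (mu i <= lm i)%N], (\sum_i (mu i : nat))%N == r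
    & #|[pred i | (mu i : nat) != 0%N]| == d].

Definition xr (r : nat) : Sge :=
  let d := dd r in
  \sum_(mu : {ffun 'I_nparts -> 'I_Ntot.+1} | mu_ok r d mu)
    let P := [seq (val i) | i <- enum 'I_nparts & (mu i : nat) != 0%N] in
    let M := [seq (mu i : nat) | i <- enum 'I_nparts & (mu i : nat) != 0%N] in
    \sum_(w : 'S_d) (-1) ^+ (odd_perm w) *
      \prod_(k < d) evar (nth 0%N P (w k)) (nth 0%N P k) (nth 0%N M k).-1.

(* coordinates on the affine subspace S = f + V:
   V has basis f_{n,i;r} (basis indices whose first index is n) *)
Definition sidx := {t : gidx | ((sval t).1.1 : nat) == nparts.-1}.
Definition FS := {mpoly F[#|{: sidx}|]}.

(* coefficient of f_t in f = sum_k f_{k,k+1; lambda_{k+1}-1} *)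
Definition fcoef (t : gidx) : F :=
  ((((sval t).1.1 : nat).+1 == (sval t).1.2) &&
   (((sval t).2 : nat) == (lm (sval t).1.2).-1))%:R.

(* restriction to S of the linear coordinate function e_t : the
   f_t-coordinate of the point f + sum_s Y_s f_s of S *)
Definition rho_coord (t : gidx) : FS :=
  (fcoef t)%:MP + \sum_(s : sidx | sval s == t) 'X_(enum_rank s).

Definition rho (p : Sge) : FS :=
  p \mPo [tuple rho_coord (enum_val i) | i < #|{: gidx}|].

Definition rho_x : Ntot.-tuple FS := [tuple rho (xr i.+1) | i < Ntot].

End Centralizer.

From Pilot Require Import Defs.
From HB Require Import structures.
From mathcomp Require Import all_boot all_order all_algebra all_fingroup.
From mathcomp Require Import mpoly zify.
Set Implicit Arguments. Unset Strict Implicit. Unset Printing Implicit Defensive.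
Import GRing.Theory.

(* On S the linear function e_(a,b;c) restricts to the coordinate f_(n,b;c) of V
   when a = n, to the constant 1 when a = b - 1 and c = lambda_b - 1, and to 0
   otherwise.  Hence a summand (mu, w) of x_r survives the restriction only if its
   factors form a chain: w is the cycle k |-> k - 1, mu is supported on the last
   d_r rows, and every nonzero part of mu but the first is full, the first one
   being then forced by |mu| = r.  So rho(x_r) = +-f_(n,b;c), where
   r - 1 = c + lambda_(b+1) + ... + lambda_n with c < lambda_b, and r |-> (b, c)
   is a bijection onto the coordinates of S.  A signed permutation of the
   variables is an automorphism of the polynomial ring, which gives both claims. *)

Section CompMpoly.
Local Open Scope ring_scope.

Lemma comp_mpolyA (R : comRingType) n k l (p : {mpoly R[n]})
    (t : n.-tuple {mpoly R[k]}) (u : k.-tuple {mpoly R[l]}) :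
  (p \mPo t) \mPo u = p \mPo [tuple tnth t i \mPo u | i < n].
Proof.
rewrite [p \mPo t]comp_mpolyE [p \mPo _]comp_mpolyE raddf_sum /=; apply: eq_bigr => m _.
rewrite linearZ /= rmorph_prod; congr (_ *: _); apply: eq_bigr => i _.
by rewrite rmorphXn tnth_mktuple.
Qed.

Lemma comp_mpoly_signed_perm (R : comRingType) n k (t : n.-tuple {mpoly R[k]})
    (phi : 'I_n -> 'I_k) (e : 'I_n -> nat) :
  bijective phi -> (forall i, tnth t i = (-1) ^+ e i * 'X_(phi i)) ->
  (forall p : {mpoly R[n]}, p \mPo t = 0 -> p = 0) /\
  (forall q : {mpoly R[k]}, exists p : {mpoly R[n]}, q = p \mPo t).
Proof.
move=> [psi phiK psiK] tE.
pose u := [tuple (-1) ^+ e (psi j) * 'X_(psi j) | j < k] : k.-tuple {mpoly R[n]}.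
have tuK p : (p \mPo t) \mPo u = p.
  rewrite comp_mpolyA -[RHS]comp_mpoly_id; congr comp_mpoly; apply: eq_from_tnth => i.
  rewrite !tnth_mktuple tE rmorphM rmorph_sign /= comp_mpolyXU -tnth_nth tnth_mktuple.
  by rewrite phiK signrMK.
have utK q : (q \mPo u) \mPo t = q.
  rewrite comp_mpolyA -[RHS]comp_mpoly_id; congr comp_mpoly; apply: eq_from_tnth => j.
  rewrite !tnth_mktuple rmorphM rmorph_sign /= comp_mpolyXU -tnth_nth tE psiK.
  by rewrite signrMK.
split=> [p pt0 | q]; first by rewrite -[p]tuK pt0 comp_mpoly0.
by exists (q \mPo u); rewrite utK.
Qed.

End CompMpoly.

Lemma sumn_drop (s : seq nat) k : sumn (drop k s) = \sum_(k <= j < size s) nth 0 s j.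
Proof.
rewrite sumnE (big_nth 0) size_drop -[in RHS](add0n k) big_addn.
by apply: eq_big_nat => j _; rewrite nth_drop addnC.
Qed.

Lemma ord_predE d (k : 'I_d.+1) : ord_pred k = (if k == 0 :> nat then d else k.-1) :> nat.
Proof.
case: k => [[|k] lt_k] //=; first by rewrite modn_small.
by rewrite modnDr modn_small // ltnW.
Qed.

Lemma consecutive_iota (m d : nat) (P : seq nat) :
  size P = d.+1 -> (forall k, k < d -> nth 0 P k.+1 = (nth 0 P k).+1) ->
  nth 0 P d = m -> P = iota (m - d) d.+1.
Proof.
move=> sizeP P_succ P_last.
have P_shift k : k <= d -> nth 0 P k = nth 0 P 0 + k.
  elim: k => [|k IH] k_lt; first by rewrite addn0.
  by rewrite P_succ // IH ?addnS // ltnW.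
apply: (@eq_from_nth _ 0) => [|k k_lt]; first by rewrite size_iota.
rewrite nth_iota -?sizeP // -P_last (P_shift d) // addnK; apply: P_shift.
by rewrite -ltnS -sizeP.
Qed.

Lemma sorted_cyclic_chain (m d : nat) (P : seq nat) (w : 'S_d.+1) :
  sorted ltn P -> size P = d.+1 ->
  (forall k : 'I_d.+1, nth 0 P (w k) = m \/ (nth 0 P (w k)).+1 = nth 0 P k) ->
  w = perm (@ord_pred_inj d.+1) /\ P = iota (m - d) d.+1.
Proof.
move=> sortP sizeP; set p := nth 0 P => chainP.
have p_homo : {in gtn d.+1 &, {homo p : j k / j < k}}.
  by rewrite -sizeP; exact: (sorted_ltn_nth ltn_trans).
have p_mono := leqW_mono_in (leq_mono_in p_homo).
have p_inj := incn_inj_in (leq_mono_in p_homo).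
have w0_top : p (w ord0) = m.
  case: (chainP ord0) => // p_w0; have := ltnSn (p (w ord0)).
  by rewrite [X in _ < X]p_w0 p_mono ?inE ?ltn_ord.
(* For k > 0, p (w k) = p k - 1 is a value of p below p k, so monotonicity forces
   w k = k - 1. *)
have wS (k : 'I_d.+1) : 0 < k -> w k = k.-1 :> nat /\ (p k.-1).+1 = p k.
  move=> k_gt0; have p_wk : (p (w k)).+1 = p k.
    case: (chainP k) => // p_wk; suff /perm_inj wk0 : w k = w ord0 by rewrite wk0 in k_gt0.
    by apply/val_inj/p_inj; rewrite ?inE ?ltn_ord // p_wk w0_top.
  have wk_lt : w k < k by rewrite -p_mono ?inE ?ltn_ord // -p_wk.
  have k1_lt : k.-1 < d.+1 by rewrite (leq_ltn_trans (leq_pred k)).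
  have le_wk : p (w k) <= p k.-1.
    by rewrite (leq_mono_in p_homo) ?inE ?ltn_ord // -ltnS prednK.
  have lt_k1 : p k.-1 < (p (w k)).+1 by rewrite p_wk p_mono ?inE ?ltn_ord ?ltn_predL.
  have p_eq : p (w k) = p k.-1 by apply/eqP; rewrite eqn_leq le_wk -ltnS.
  by split; [apply: p_inj; rewrite ?inE ?ltn_ord | rewrite -p_eq].
have w0_last : w ord0 = d :> nat.
  apply/eqP; rewrite eqn_leq -ltnS ltn_ord /= leqNgt; apply/negP => w0_lt.
  have [/= wj _] := wS (Ordinal (w0_lt : (w ord0).+1 < d.+1)) isT.
  by have /perm_inj/(congr1 val) := val_inj wj.
split.
  apply/permP => k; apply: ord_inj; rewrite permE ord_predE.
  case: posnP => [k0 | /wS[] //]; rewrite -[in RHS]w0_last.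
  by congr (val (w _)); apply: ord_inj.
have p_last : p d = m by rewrite -w0_top w0_last.
apply: consecutive_iota => // k lt_kd.
exact/esym/(wS (Ordinal (lt_kd : k.+1 < d.+1)) isT).2.
Qed.

Section Centralizer.
Variables (F : fieldType) (lam : seq nat).
Hypotheses (lam_ne0 : 0 < size lam) (lam_gt0 : all (fun k => 0 < k) lam)
  (lam_sorted : sorted leq lam).

Local Notation n := (nparts lam).
Local Notation lm := (lm lam).
Local Notation N := (Ntot lam).
Local Notation rho := (@rho F lam).
Local Notation evar := (evar F lam).

HB.instance Definition _ := GRing.RMorphism.copy rho
  (comp_mpoly [tuple rho_coord F (enum_val i) | i < #|{: gidx lam}|]).

Lemma lm_gt0 i : i < n -> 0 < lm i.
Proof. exact: (all_nthP 0 lam_gt0). Qed.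

Lemma lm_le_last i : i < n -> lm i <= lm n.-1.
Proof.
move=> lt_i; apply: (sorted_leq_nth leq_trans leqnn 0 lam_sorted); rewrite ?inE //.
  by rewrite ltn_predL (leq_ltn_trans _ lt_i).
by rewrite -ltnS prednK // (leq_ltn_trans _ lt_i).
Qed.

Lemma lm_le_Ntot i : lm i <= N.
Proof.
rewrite /Defs.lm /Ntot; elim: lam i => [|x s IH] [|i] //=; first exact: leq_addr.
exact: leq_trans (IH i) (leq_addl x _).
Qed.

Lemma eq_gidx (t t' : gidx lam) :
  (sval t).1.1 = (sval t').1.1 :> nat -> (sval t).1.2 = (sval t').1.2 :> nat ->
  (sval t).2 = (sval t').2 :> nat -> t = t'.
Proof.
case: t t' => [[[a b] c] ?] [[[a' b'] c'] ?] /= e1 e2 e3; apply: val_inj => /=.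
by rewrite (val_inj e1) (val_inj e2) (val_inj e3).
Qed.

Lemma eq_sidx (s s' : sidx lam) :
  (sval (sval s)).1.2 = (sval (sval s')).1.2 :> nat ->
  (sval (sval s)).2 = (sval (sval s')).2 :> nat -> s = s'.
Proof.
by move=> e2 e3; apply/val_inj/eq_gidx => //; rewrite (eqP (proj2_sig s)) (eqP (proj2_sig s')).
Qed.

Lemma rhoX (t : gidx lam) : rho 'X_(enum_rank t) = rho_coord F t.
Proof. by rewrite /Defs.rho comp_mpolyXU -tnth_nth tnth_mktuple enum_rankK. Qed.

Lemma rho_evar a b c : rho (evar a b c) =
  (\sum_(t : gidx lam | [&& (sval t).1.1 == a :> nat, (sval t).1.2 == b :> nat
                          & (sval t).2 == c :> nat]) rho_coord F t)%R.
Proof. by rewrite /Defs.evar rmorph_sum; apply: eq_bigr => t _; exact: rhoX. Qed.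

Lemma rho_evar_gidx (t : gidx lam) :
  rho (evar (sval t).1.1 (sval t).1.2 (sval t).2) = rho_coord F t.
Proof.
rewrite rho_evar (big_pred1 t) // => t'.
by apply/and3P/eqP => [[/eqP e1 /eqP e2 /eqP e3] | ->] //; exact: eq_gidx.
Qed.

Lemma rho_evar_neq0 a b c :
  (rho (evar a b c) != 0)%R -> a = n.-1 \/ a.+1 = b /\ c = (lm b).-1.
Proof.
move=> nz; case: (eqVneq a n.-1) => [|a_ne]; [by left | right].
have [/andP[/eqP-> /eqP->] // | fcoef0] := boolP ((a.+1 == b) && (c == (lm b).-1)).
move: nz; rewrite rho_evar big1 ?eqxx // => t /and3P[/eqP ta /eqP tb /eqP tc].
rewrite /rho_coord /fcoef ta tb tc (negbTE fcoef0) mpolyC0 add0r.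
by rewrite big1 // => s /eqP st; move: (proj2_sig s) a_ne; rewrite st ta => ->.
Qed.

Lemma rho_evar_last (s : sidx lam) :
  rho (evar n.-1 (sval (sval s)).1.2 (sval (sval s)).2) = 'X_(enum_rank s).
Proof.
have := rho_evar_gidx (sval s); rewrite (eqP (proj2_sig s)) => ->.
rewrite /rho_coord /fcoef (eqP (proj2_sig s)) eq_sym.
rewrite ltn_eqF ?(leq_trans (ltn_ord _) (leqSpred _)) // mpolyC0 add0r.
by rewrite (big_pred1 s) // => s'; apply/eqP/eqP => [/val_inj | ->].
Qed.

Lemma rho_evar_superdiag a : a.+1 < n -> rho (evar a a.+1 (lm a.+1).-1) = 1%R.
Proof.
move=> lt_a1n; have lm_a1 := lm_gt0 lt_a1n.
have lt_c : (lm a.+1).-1 < N by rewrite prednK ?lm_le_Ntot.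
have valid : gvalid (Ordinal (ltnW lt_a1n), Ordinal lt_a1n, Ordinal lt_c).
  rewrite /gvalid /sij /= ltn_predL lm_a1 andbT -ltnS prednK //.
  by rewrite ltn_subrL lm_a1 andbT leq_min lm_a1 lm_gt0 ?(ltnW lt_a1n).
have := rho_evar_gidx (exist (@gvalid lam) _ valid) => /= ->.
rewrite /rho_coord /fcoef /= !eqxx mpolyC1 big1 ?addr0 // => s /eqP st.
by move: (proj2_sig s); rewrite st /= => /eqP; lia.
Qed.

Definition supp_pos (mu : {ffun 'I_n -> 'I_N.+1}) : seq nat :=
  [seq val i | i <- enum 'I_n & (mu i : nat) != 0].
Definition supp_mult (mu : {ffun 'I_n -> 'I_N.+1}) : seq nat :=
  [seq (mu i : nat) | i <- enum 'I_n & (mu i : nat) != 0].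

Lemma sorted_supp_pos mu : sorted ltn (supp_pos mu).
Proof.
rewrite sorted_map; apply: sorted_filter; first by move=> ? ? ?; exact: ltn_trans.
by rewrite -sorted_map val_enum_ord iota_ltn_sorted.
Qed.

Lemma size_supp_pos mu : size (supp_pos mu) = #|[pred i | (mu i : nat) != 0]|.
Proof. by rewrite size_map size_filter cardE !size_filter enumT; apply: eq_count. Qed.

Lemma mem_supp_pos mu (i : 'I_n) : (val i \in supp_pos mu) = ((mu i : nat) != 0).
Proof. by rewrite (mem_map val_inj) mem_filter mem_enum andbT. Qed.

Lemma supp_multE mu (i0 : 'I_n) :
  supp_mult mu = [seq (mu (insubd i0 j) : nat) | j <- supp_pos mu].
Proof. by rewrite -map_comp; apply: eq_map => i /=; rewrite valKd. Qed.

Definition xr_term d mu (w : 'S_d) : Sge F lam :=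
  (\prod_(k < d) evar (nth 0%N (supp_pos mu) (w k)) (nth 0%N (supp_pos mu) k)
                      (nth 0%N (supp_mult mu) k).-1)%R.

Lemma xrE r : xr F lam r = (\sum_(mu | mu_ok r (dd lam r) mu)
  \sum_(w : 'S_(dd lam r)) (-1) ^+ odd_perm w * xr_term mu w)%R.
Proof. by []. Qed.

Lemma rho_xr_term_neq0 d mu (w : 'S_d.+1) :
  size (supp_pos mu) = d.+1 -> (rho (xr_term mu w) != 0)%R ->
  [/\ w = perm (@ord_pred_inj d.+1), supp_pos mu = iota (n.-1 - d) d.+1 &
      forall k, 0 < k <= d -> (nth 0 (supp_mult mu) k).-1 = (lm (n.-1 - d + k)).-1].
Proof.
move=> size_mu; rewrite rmorph_prod => /prodf_neq0 /= factor_neq0.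
have factor k := rho_evar_neq0 (factor_neq0 k isT).
set P := supp_pos mu in size_mu factor *; set M := supp_mult mu in factor *.
have [w_cyc P_iota] : w = perm (@ord_pred_inj d.+1) /\ P = iota (n.-1 - d) d.+1.
  apply: sorted_cyclic_chain => [|//|k]; first exact: sorted_supp_pos.
  by case: (factor k) => [|[]]; [left | right].
split=> // k /andP[k_gt0 k_le].
have d_le : d <= n.-1.
  have /mapP[j _ /= j_last] : n.-1 - d + d \in P.
    by rewrite P_iota mem_iota leq_addr /= ltn_add2l.
  by have := ltn_ord j; rewrite -j_last; lia.
have k_lt : k < d.+1 by [].
have := factor (Ordinal k_lt); rewrite w_cyc permE ord_predE /= (gtn_eqF k_gt0) P_iota.
by rewrite !nth_iota ?(leq_ltn_trans (leq_pred k)) //; case; lia.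
Qed.

(* [dseq] is the flattening of blocks of sizes [rev lam], so position [i] lies in
   block [xblock i], i.e. d_(i+1) = xblock i + 1, at offset [xoff i];
   rho (x_(i+1)) turns out to be +-f_(n, xcol i; xoff i) (indices from 0). *)
Definition xblock (i : nat) : nat := reshape_index (rev lam) i.
Definition xoff (i : nat) : nat := reshape_offset (rev lam) i.
Definition xcol (i : nat) : nat := n.-1 - xblock i.

Lemma flatten_xblock i : flatten_index (rev lam) (xblock i) (xoff i) = i.
Proof. exact: reshape_indexK. Qed.

Lemma xblock_lt (i : 'I_N) : xblock i < n.
Proof. by have := @reshape_indexP (rev lam) i; rewrite size_rev sumn_rev; apply. Qed.

Lemma nth_rev_lam k : k < n -> nth 0 (rev lam) k = lm (n.-1 - k).
Proof. by move=> lt_k; rewrite nth_rev // -predn_sub -subnS. Qed.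

Lemma xoff_lt (i : 'I_N) : xoff i < lm (xcol i).
Proof.
by rewrite -nth_rev_lam ?xblock_lt // reshape_offsetP // sumn_rev.
Qed.

Lemma xoff_ltN (i : 'I_N) : xoff i < N.
Proof. by rewrite (leq_ltn_trans _ (ltn_ord i)) // -{2}(flatten_xblock i) leq_addl. Qed.

Lemma pred_nparts_lt : n.-1 < n.
Proof. by rewrite ltn_predL. Qed.

Lemma xcol_lt i : xcol i < n.
Proof. exact: leq_ltn_trans (leq_subr _ _) pred_nparts_lt. Qed.

Lemma dd_xblock (i : 'I_N) : dd lam i.+1 = (xblock i).+1.
Proof.
have shape_blocks : shape [seq nseq (lm (n - k.+1)) k.+1 | k <- iota 0 n] = rev lam.
  apply: (@eq_from_nth _ 0) => [|k]; rewrite size_map ?size_map size_iota ?size_rev //.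
  move=> lt_k; rewrite /shape -map_comp (nth_map 0) ?size_iota // nth_iota //=.
  by rewrite size_nseq nth_rev_lam // subnS predn_sub.
rewrite /dd /dseq /= nth_flatten shape_blocks (nth_map 0) ?size_iota ?xblock_lt //.
by rewrite nth_iota ?xblock_lt // nth_nseq subnS predn_sub xoff_lt.
Qed.

Lemma xcoord_valid (i : 'I_N) :
  gvalid (Ordinal pred_nparts_lt, Ordinal (xcol_lt i), Ordinal (xoff_ltN i)).
Proof.
rewrite /gvalid /sij /= xoff_lt andbT.
by rewrite (minn_idPr (lm_le_last (xcol_lt i))) subnn.
Qed.

Definition xcoord (i : 'I_N) : sidx lam :=
  exist _ (exist (@gvalid lam) _ (xcoord_valid i)) (eqxx n.-1).

Lemma xcoord_bij : bijective xcoord.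
Proof.
have col_le (s : sidx lam) : (sval (sval s)).1.2 <= n.-1 by rewrite -ltnS prednK.
have c_lt (s : sidx lam) :
    (sval (sval s)).2 < nth 0 (rev lam) (n.-1 - (sval (sval s)).1.2).
  rewrite nth_rev_lam ?subKn //; first by case/andP: (proj2_sig (sval s)).
  exact: leq_ltn_trans (leq_subr _ _) pred_nparts_lt.
have idx_lt (s : sidx lam) :
    flatten_index (rev lam) (n.-1 - (sval (sval s)).1.2) (sval (sval s)).2 < N.
  by have := flatten_indexP (c_lt s); rewrite sumn_rev.
exists (fun s => Ordinal (idx_lt s)) => [i | s].
  apply: val_inj; rewrite /= /xcol subKn ?flatten_xblock // -ltnS prednK //.
  exact: xblock_lt.
apply: eq_sidx; rewrite /= /xcol /xblock /xoff ?flatten_indexKr //.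
by rewrite flatten_indexKl // subKn.
Qed.

Section ChainTerm.
Variable i : 'I_N.

Local Notation d := (xblock i).
Local Notation b := (xcol i).
Local Notation c := (xoff i).
Local Notation cyc := (perm (@ord_pred_inj d.+1)).

Lemma xblock_le : d <= n.-1.
Proof. by rewrite -ltnS prednK ?xblock_lt. Qed.

Lemma xcol_add : b + d.+1 = n.
Proof. by have := xblock_le; have := pred_nparts_lt; rewrite /xcol; lia. Qed.

Definition chain_mult (j : nat) : nat :=
  if j == b then c.+1 else if b < j then lm j else 0.

Definition chain_mu : {ffun 'I_n -> 'I_N.+1} := [ffun j : 'I_n => inord (chain_mult j)].

Lemma chain_mult_le j : chain_mult j <= lm j.
Proof.
by rewrite /chain_mult; case: (eqVneq j b) => [->|_]; [exact: xoff_lt | case: ifP].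
Qed.

Lemma chain_muE (j : 'I_n) : chain_mu j = chain_mult j :> nat.
Proof. by rewrite ffunE inordK // ltnS (leq_trans (chain_mult_le j)) ?lm_le_Ntot. Qed.

Lemma chain_mult_eq0 j : j < n -> (chain_mult j == 0) = (j < b).
Proof.
move=> lt_j; rewrite /chain_mult.
by case: ltngtP => // _; rewrite eqn0Ngt lm_gt0.
Qed.

Lemma supp_pos_chain : supp_pos chain_mu = iota b d.+1.
Proof.
have -> : supp_pos chain_mu = [seq j <- iota 0 n | b <= j].
  rewrite -val_enum_ord filter_map; congr map; apply: eq_filter => j /=.
  by rewrite chain_muE chain_mult_eq0 // -leqNgt.
rewrite -xcol_add iotaD filter_cat add0n.
rewrite (eq_in_filter (a2 := pred0)) ?filter_pred0; last first.
  by move=> j; rewrite mem_iota => /andP[_ lt_j] /=; rewrite leqNgt lt_j.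
by rewrite (eq_in_filter (a2 := predT)) ?filter_predT // => j; rewrite mem_iota => /andP[].
Qed.

Lemma sum_chain_mult : \sum_(j < n) chain_mult j = i.+1.
Proof.
rewrite -(big_mkord xpredT) (@big_cat_nat _ _ _ b) ?(ltnW (xcol_lt i)) //=.
rewrite big1_seq => [|j]; last first.
  by rewrite mem_index_iota /chain_mult => /andP[_ lt_j]; rewrite ltn_eqF // ltnNge ltnW.
rewrite big_ltn ?xcol_lt // /chain_mult eqxx add0n.
rewrite (eq_big_nat _ _ (F2 := lm)) => [|j /andP[lt_bj _]]; last by rewrite gtn_eqF // lt_bj.
rewrite -[\sum_(_ <= _ < _) _]sumn_drop -{3}(flatten_xblock i) /flatten_index.
rewrite take_rev sumn_rev addSn addnC.
by congr (sumn (drop _ _) + _).+1; have := xblock_le; rewrite /xcol /nparts; lia.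
Qed.

Lemma chain_mu_ok : mu_ok i.+1 d.+1 chain_mu.
Proof.
apply/and3P; split.
- by apply/forallP => j; rewrite chain_muE chain_mult_le.
- by rewrite -sum_chain_mult; apply/eqP/eq_bigr => j _; rewrite chain_muE.
- by rewrite -size_supp_pos supp_pos_chain size_iota.
Qed.

Lemma chain_mu_unique mu (w : 'S_d.+1) :
  mu_ok i.+1 d.+1 mu -> (rho (xr_term mu w) != 0)%R -> mu = chain_mu /\ w = cyc.
Proof.
case/and3P=> _ /eqP sum_mu /eqP card_mu nz.
have [w_cyc supp_mu mult_mu] := rho_xr_term_neq0 (etrans (size_supp_pos mu) card_mu) nz.
split=> //; pose jb : 'I_n := Ordinal (xcol_lt i).
have mu_off (j : 'I_n) : j != jb -> mu j = chain_mult j :> nat.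
  move=> j_ne; have j_neb : (j : nat) != b := j_ne.
  have := mem_supp_pos mu j; rewrite supp_mu mem_iota xcol_add ltn_ord andbT.
  rewrite /chain_mult ifN //; case: ltnP => [lt_bj | le_jb] mu_nz; last first.
    by apply/eqP; move: mu_nz; rewrite leqNgt ltn_neqAle j_neb le_jb => /esym/negbFE.
  have k_le : j - b <= d by rewrite leq_subLR -ltnS -addnS xcol_add.
  have := mult_mu (j - b); rewrite subn_gt0 lt_bj k_le => /(_ isT).
  rewrite (supp_multE mu jb) (nth_map 0) ?supp_mu ?size_iota ?nth_iota ?ltnS //.
  rewrite /xcol subnKC ?valKd; last exact: ltnW.
  by move/(congr1 S); rewrite !prednK ?lm_gt0 // lt0n -mu_nz ltnW.
have mu_b : mu jb = chain_mult b :> nat.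
  have : \sum_(j < n) (mu j : nat) = \sum_(j < n) chain_mult j.
    by rewrite sum_mu sum_chain_mult.
  rewrite (bigD1 jb) // [in RHS](bigD1 jb) //= (eq_bigr _ mu_off); exact: addIn.
apply/ffunP => j; apply: ord_inj; rewrite chain_muE.
by case: (eqVneq j jb) => [->|]; [exact: mu_b | exact: mu_off].
Qed.

Lemma supp_mult_chain : supp_mult chain_mu = map chain_mult (iota b d.+1).
Proof.
rewrite (supp_multE _ (Ordinal (xcol_lt i))) supp_pos_chain; apply/eq_in_map => j.
by rewrite mem_iota xcol_add => /andP[_ lt_j]; rewrite chain_muE val_insubd lt_j.
Qed.

Lemma rho_xr_term_chain : rho (xr_term chain_mu cyc) = 'X_(enum_rank (xcoord i)).
Proof.
rewrite rmorph_prod big_ord_recl big1 ?mulr1 => [|[k lt_kd] _].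
  rewrite permE ord_predE /= supp_pos_chain supp_mult_chain (nth_map 0) // !nth_iota //.
  rewrite addn0 /chain_mult eqxx -[b + d]/(n.-1 - d + d) subnK ?xblock_le //.
  exact: (rho_evar_last (xcoord i)).
rewrite permE ord_predE !lift0 /= supp_pos_chain supp_mult_chain (nth_map 0) ?size_iota //.
have lt_b : b < b + k.+1 by rewrite addnS ltnS leq_addr.
rewrite !nth_iota ?ltnS ?(ltnW lt_kd) //.
rewrite /chain_mult (gtn_eqF lt_b) lt_b addnS.
by rewrite rho_evar_superdiag // -addnS -[X in _ < X]xcol_add ltn_add2l.
Qed.

Definition xsign : bool := odd_perm cyc.

Lemma rho_xr : rho (xr F lam i.+1) = ((-1) ^+ xsign * 'X_(enum_rank (xcoord i)))%R.
Proof.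
have term0 mu (w : 'S_d.+1) : mu_ok i.+1 d.+1 mu -> (mu != chain_mu) || (w != cyc) ->
    rho ((-1) ^+ odd_perm w * xr_term mu w)%R = 0%R.
  move=> ok_mu; rewrite rmorphM rmorph_sign /=.
  case: (eqVneq (rho (xr_term mu w)) 0%R) => [->|]; first by rewrite mulr0.
  by case/(chain_mu_unique ok_mu) => -> ->; rewrite !eqxx.
rewrite xrE dd_xblock rmorph_sum (bigD1 chain_mu) ?chain_mu_ok //=.
rewrite [X in (_ + X)%R]big1 ?addr0; last first.
  by move=> mu /andP[ok_mu mu_ne]; rewrite rmorph_sum big1 // => w _ /=; rewrite term0 ?mu_ne.
rewrite rmorph_sum (bigD1 cyc) //= [X in (_ + X)%R]big1 ?addr0 => [|w w_ne]; last first.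
  by rewrite /= term0 ?chain_mu_ok ?w_ne ?orbT.
by rewrite rmorphM rmorph_sign /= rho_xr_term_chain.
Qed.

End ChainTerm.

End Centralizer.

Local Open Scope ring_scope.

Theorem lemma4p2 (F : closedFieldType) (lam : seq nat) :
  [pchar F] =i pred0 ->
  (0 < size lam)%N ->
  all (fun k => 0 < k)%N lam ->
  sorted leq lam ->
  (* algebraically independent *)
  (forall p : {mpoly F[Ntot lam]}, p \mPo rho_x F lam = 0 -> p = 0) /\
  (* generate F[S] *)
  (forall q : FS F lam, exists p : {mpoly F[Ntot lam]}, q = p \mPo rho_x F lam).
Proof.
move=> _ lam_ne0 lam_gt0 lam_sorted.
apply: (comp_mpoly_signed_perm (e := @xsign lam)
  (phi := enum_rank \o xcoord lam_ne0 lam_sorted)).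
  exact: bij_comp (enum_rank_bij _) (xcoord_bij lam_ne0 lam_sorted).
by move=> i; rewrite tnth_mktuple rho_xr.
Qed.
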